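(* Let $n\ge2$ and $1\le m,k\le n$. Then $\mathcal{H}_n(m,k)=\mathcal{L}_n(p,p,\ldots,p)$ ($k$ entries) where $0\le p\le n-1$, $p\equiv k-m-1 \pmod n$. Consequently the natural HNN extension $\widehat{H}_n(m,k)$ of $H_n(m,k)$ is isomorphic to the LOG group of the LOG $\Gamma(n;(a_{m-k+1})^k)$ (subscript mod $n$), i.e. the group with presentation \[\langle a_1,\ldots,a_n,t_0,\ldots,t_{k-1}\mid a_{i+1}=t_0^{-1}a_it_0\ (1\le i\le n,\ a_{n+1}=a_1),\ t_{j+1}=a_{m-k+1}^{-1}t_ja_{m-k+1}\ (0\le j\le k-1,\ t_k=a_1)\rangle.\]
   Context: $\mathcal{H}_n(m,k)=\langle x_1,\ldots,x_n\mid x_ix_{i+m}=x_{i+k}\ (1\le i\le n)\rangle$ (subscripts mod $n$) defines the group $H_n(m,k)$; this is the cyclic presentation $\mathcal{G}_n(x_1x_{1+m}x_{1+k}^{-1})$. For $0\le p_0,\ldots,p_{r-1}\le n-1$ and $p_r=-1$, $\mathcal{L}_n(p_0,\ldots,p_{r-1})$ denotes the cyclic presentation $\mathcal{G}_n\big((x_{p_0}x_{p_1+1}\cdots x_{p_{r-1}+(r-1)}x_{p_r+r})(x_{p_0+1}x_{p_1+2}\cdots x_{p_{r-1}+r})^{-1}\big)$, where $\mathcal{G}_n(w)=\langle x_1,\ldots,x_n\mid w,\theta(w),\ldots,\theta^{n-1}(w)\rangle$ with $\theta(x_i)=x_{i+1}$ (subscripts mod $n$). The natural HNN extension of a cyclically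 presented group $G_n(w)$ is $G_n(w)\rtimes_\phi\mathbb{Z}$ where $\phi(x_i)=x_{i+1}$. A LOG group is the group of a LOG presentation $\langle V\mid \tau(e)=\lambda(e)^{-1}\iota(e)\lambda(e)\ (e\in E)\rangle$ of a labelled oriented graph. *)

(* Finitely presented groups are handled via words and the
   congruence generated by the relators (no quotient types needed). *)
From HB Require Import structures.
From mathcomp Require Import all_boot all_order all_algebra.
Set Implicit Arguments.
Unset Strict Implicit.
Unset Printing Implicit Defensive.
Import Order.TTheory GRing.Theory Num.Theory.

(* A word over generators X: letters (x, false) = x, (x, true) = x^-1. *)
Definition word (X : Type) := seq (X * bool).

Definition winv (X : Type) (w : word X) : word X :=
  rev (map (fun xb => (xb.1, ~~ xb.2)) w).

(* Substitution of words for generators (the homomorphism of free groups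
   determined by images of generators). *)
Definition wsubst (X Y : Type) (f : X -> word Y) (w : word X) : word Y :=
  flatten (map (fun xb => if xb.2 then winv (f xb.1) else f xb.1) w).

(* Equality in the group <X | R>: the congruence on words generated by free
   cancellation and by r = 1 for each relator r. *)
Inductive peq (X : Type) (R : word X -> Prop) : word X -> word X -> Prop :=
| peq_refl u : peq R u u
| peq_sym u v : peq R u v -> peq R v u
| peq_trans u v w : peq R u v -> peq R v w -> peq R u w
| peq_cat u u' v v' : peq R u u' -> peq R v v' -> peq R (u ++ v) (u' ++ v')
| peq_cancel x b : peq R [:: (x, b); (x, ~~ b)] [::]
| peq_rel r : R r -> peq R r [::].

Definition pres_iso (X Y : Type) (RX : word X -> Prop) (RY : word Y -> Prop) :
  Prop :=
  exists (f : X -> word Y) (g : Y -> word X),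
    [/\ (forall r, RX r -> peq RY (wsubst f r) [::]),
        (forall r, RY r -> peq RX (wsubst g r) [::]),
        (forall x, peq RX (wsubst g (f x)) [:: (x, false)]) &
        (forall y, peq RY (wsubst f (g y)) [:: (y, false)])].

(* Generator index type {x_1,...,x_n}; for n >= 1 it has exactly n elements.
   Subscripts are taken mod n: x_i is gidx n element (i mod n). *)
Definition gidx (n : nat) := 'I_n.-1.+1.

Definition zidx (n : nat) (i : int) : gidx n :=
  @inord n.-1 (absz (i %% (Posz n))%Z).

Definition wshift (n i : nat) (w : word (gidx n)) : word (gidx n) :=
  wsubst (fun j : gidx n => [:: (zidx n (Posz (nat_of_ord j) + Posz i), false)]) w.

(* relators of G_n(w) = <x_1..x_n | w, theta(w), ..., theta^{n-1}(w)> *)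
Definition cyc_rel (n : nat) (w : word (gidx n)) : word (gidx n) -> Prop :=
  fun r => exists i : nat, i < n /\ r = wshift i w.

Definition H_word (n m k : nat) : word (gidx n) :=
  [:: (zidx n 1, false); (zidx n (1 + Posz m), false);
      (zidx n (1 + Posz k), true)].

(* (x_{p_0} x_{p_1+1} ... x_{p_{r-1}+(r-1)} x_{p_r+r}) (x_{p_0+1} ... x_{p_{r-1}+r})^{-1}
   with p_r = -1. *)
Definition L_word (n : nat) (ps : seq nat) : word (gidx n) :=
  let r := size ps in
  mkseq (fun j => (zidx n (Posz (nth 0 ps j) + Posz j), false)) r
  ++ [:: (zidx n (Posz r - 1), false)]
  ++ winv (mkseq (fun j => (zidx n (Posz (nth 0 ps j) + Posz j + 1), false)) r).

(* Given <X | R> and an automorphism phi given on generators, the semidirect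
   product with Z is <X, t | R, t x t^{-1} = phi(x) (x in X)>; t is None. *)
Definition liftw (X : Type) (w : word X) : word (option X) :=
  map (fun xb => (Some xb.1, xb.2)) w.

Definition hnn_rel (X : Type) (R : word X -> Prop) (phi : X -> word X) :
  word (option X) -> Prop :=
  fun r => (exists r0, R r0 /\ r = liftw r0) \/
           (exists x, r = [:: (None, false); (Some x, false); (None, true)]
                          ++ winv (liftw (phi x))).

Definition cyc_shift (n : nat) (j : gidx n) : word (gidx n) :=
  [:: (zidx n (Posz (nat_of_ord j) + 1), false)].

(* <V | tau(e) = lambda(e)^{-1} iota(e) lambda(e), e in E>; relator
   lambda(e)^{-1} iota(e) lambda(e) tau(e)^{-1}. *)
Definition log_rel (V E : Type) (iota tau lam : E -> V) : word V -> Prop :=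
  fun r => exists e : E,
    r = [:: (lam e, true); (iota e, false); (lam e, false); (tau e, true)].

(* The LOG Gamma(n; (a_{m-k+1})^k): vertices a_1..a_n (inl), t_0..t_{k-1} (inr);
   edges: a_i -> a_{i+1} labelled t_0 (inl i), and t_j -> t_{j+1} labelled
   a_{m-k+1} (inr j), with t_k = a_1. *)
Definition logV (n k : nat) := (gidx n + gidx k)%type.

Definition log_iota (n k : nat) (e : logV n k) : logV n k := e.

Definition log_tau (n k : nat) (e : logV n k) : logV n k :=
  match e with
  | inl i => inl (zidx n (Posz (nat_of_ord i) + 1))
  | inr j => if (nat_of_ord j).+1 < k then inr (zidx k (Posz (nat_of_ord j) + 1))
             else inl (zidx n 1)
  end.

Definition log_lam (n m k : nat) (e : logV n k) : logV n k :=
  match e with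
  | inl _ => inr (zidx k 0)
  | inr _ => inl (zidx n (Posz m - Posz k + 1))
  end.

From HB Require Import structures.
From mathcomp Require Import all_boot all_order all_algebra.
From mathcomp Require Import zify.
From Stdlib Require Import Setoid.
Set Implicit Arguments. Unset Strict Implicit. Unset Printing Implicit Defensive.
Import Order.TTheory GRing.Theory Num.Theory.

(* After the
   arithmetic of subscripts mod n, the two assertions are proved separately.
   - H_n(m,k) = L_n(p,...,p) via x_y |-> x_(y-m) x_(y-m+1) ... x_(y-m+k-1)
     and back via x_y |-> x_y^-1 x_(y+1).  The key fact in L is that a run of
     k consecutive generators starting at j, followed by x_(j+m), is the run
     starting at j+1.
   - The HNN extension is the LOG group via t |-> t_0,
     x_y |-> a_(2m-k+1-y)^k t_0^-k, and back via
     a_y |-> x_(m-k+1-y)^-1 t x_(m-k+1-y),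
     t_j |-> (x_0^-1 t x_0)^-j t (x_0^-1 t x_0)^j.  The key fact in the LOG
     group is t_0 a_d^k = a_d^k a_(d-m+k) for every d. *)

(** Free-group calculus on words: formal inverses and substitutions. *)

Section WordInverse.
Variable X : Type.

Lemma winv_cat (u v : word X) : winv (u ++ v) = winv v ++ winv u.
Proof. by rewrite /winv map_cat rev_cat. Qed.

Lemma winvK (w : word X) : winv (winv w) = w.
Proof.
rewrite /winv map_rev revK -map_comp -[RHS]map_id.
by apply: eq_map => -[x b] /=; rewrite negbK.
Qed.

Lemma winv_cons (a : X * bool) (w : word X) :
  winv (a :: w) = winv w ++ [:: (a.1, ~~ a.2)].
Proof. by rewrite -cat1s winv_cat. Qed.

Lemma winv_nseq (x : X) (b : bool) (s : nat) :
  winv (nseq s (x, b)) = nseq s (x, ~~ b).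
Proof. by rewrite /winv map_nseq rev_nseq. Qed.

End WordInverse.

Lemma nseqSr (A : Type) (a : A) (s : nat) : nseq s.+1 a = nseq s a ++ [:: a].
Proof. by rewrite -addn1 nseqD. Qed.

Lemma nseq_swap (A : Type) (a : A) (s : nat) (w : seq A) :
  nseq s a ++ a :: w = a :: nseq s a ++ w.
Proof. by rewrite -cat1s catA -nseqSr. Qed.

Lemma flatten_nseq1 (A : Type) (a : A) (s : nat) : flatten (nseq s [:: a]) = nseq s a.
Proof. by elim: s => //= s ->. Qed.

Section WordSubstitution.
Variables (X Y : Type) (f : X -> word Y).

Lemma wsubst_cat (u v : word X) : wsubst f (u ++ v) = wsubst f u ++ wsubst f v.
Proof. by rewrite /wsubst map_cat flatten_cat. Qed.

Lemma wsubst_winv (w : word X) : wsubst f (winv w) = winv (wsubst f w).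
Proof.
elim: w => [|[x b] w IH] //.
have -> : wsubst f ((x, b) :: w) = wsubst f [:: (x, b)] ++ wsubst f w.
  by rewrite /wsubst /= cats0.
rewrite winv_cons (wsubst_cat (winv w)) IH winv_cat /wsubst /= !cats0.
by case: b; rewrite ?winvK.
Qed.

Lemma wsubst_gen (x : X) : wsubst f [:: (x, false)] = f x.
Proof. by rewrite /wsubst /= cats0. Qed.

Lemma wsubst_nseq_gen (x : X) (s : nat) :
  wsubst f (nseq s (x, false)) = flatten (nseq s (f x)).
Proof. by elim: s => //= s IH; rewrite -IH. Qed.

Lemma wsubst_nseq_inv (x : X) (s : nat) :
  wsubst f (nseq s (x, true)) = flatten (nseq s (winv (f x))).
Proof. by elim: s => //= s IH; rewrite -IH. Qed.

Lemma wsubst_conj (a b : X) :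
  wsubst f [:: (a, true); (b, false); (a, false)] = winv (f a) ++ f b ++ f a.
Proof. by rewrite /wsubst /= cats0. Qed.

Lemma wsubst_conj_inv (a b c : X) :
  wsubst f [:: (a, true); (b, false); (a, false); (c, true)] =
  winv (f a) ++ f b ++ f a ++ winv (f c).
Proof. by rewrite /wsubst /= cats0. Qed.

End WordSubstitution.

(** Equality in the presented group <X | R> is a congruence for
    concatenation, consing and formal inversion; we register it as a setoid
    so that group computations can be done by rewriting. *)

Add Parametric Relation (X : Type) (R : word X -> Prop) : (word X) (peq R)
  reflexivity proved by (@peq_refl X R)
  symmetry proved by (@peq_sym X R)
  transitivity proved by (@peq_trans X R) as peq_setoid.

Add Parametric Morphism (X : Type) (R : word X -> Prop) : (@cat (X * bool))
  with signature (peq R) ==> (peq R) ==> (peq R) as peq_cat_morphism.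
Proof. by move=> u u' Hu v v' Hv; apply: peq_cat. Qed.

Add Parametric Morphism (X : Type) (R : word X -> Prop) : (@cons (X * bool))
  with signature (@eq (X * bool)) ==> (peq R) ==> (peq R) as peq_cons_morphism.
Proof. by move=> a u v H; apply: (peq_cat (peq_refl R [:: a]) H). Qed.

#[local] Hint Resolve peq_refl : core.

Section GroupLaws.
Variables (X : Type) (R : word X -> Prop).
Local Notation "u ~ v" := (peq R u v) (at level 70).

Lemma cancel_letter (x : X) (b : bool) (w : word X) : ((x, b) :: (x, ~~ b) :: w) ~ w.
Proof. exact: (peq_cat (peq_cancel R x b) (peq_refl R w)). Qed.

Lemma cancel_letterV (x : X) (b : bool) (w : word X) : ((x, ~~ b) :: (x, b) :: w) ~ w.
Proof. by have := cancel_letter x (~~ b) w; rewrite negbK. Qed.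

Lemma cancel_gen_inv (x : X) (w : word X) : ((x, false) :: (x, true) :: w) ~ w.
Proof. exact: cancel_letter x false w. Qed.

Lemma cancel_inv_gen (x : X) (w : word X) : ((x, true) :: (x, false) :: w) ~ w.
Proof. exact: cancel_letter x true w. Qed.

Lemma cancel_nseq (x : X) (b : bool) (s : nat) (w : word X) :
  (nseq s (x, b) ++ nseq s (x, ~~ b) ++ w) ~ w.
Proof.
elim: s w => [|s IH] w //.
by rewrite nseqSr -catA /= cancel_letter.
Qed.

Lemma cancel_nseq_gen_inv (x : X) (s : nat) (w : word X) :
  (nseq s (x, false) ++ nseq s (x, true) ++ w) ~ w.
Proof. exact: cancel_nseq x false s w. Qed.

Lemma cancel_nseq_inv_gen (x : X) (s : nat) (w : word X) :
  (nseq s (x, true) ++ nseq s (x, false) ++ w) ~ w.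
Proof. exact: cancel_nseq x true s w. Qed.

Lemma mul_winv (w : word X) : (w ++ winv w) ~ [::].
Proof.
elim: w => [|[x b] w IH] //=.
by rewrite winv_cons catA IH /=; apply: peq_cancel.
Qed.

Lemma winv_mul (w : word X) : (winv w ++ w) ~ [::].
Proof. by have := mul_winv (winv w); rewrite winvK. Qed.

Lemma winv_mul_cat (u w : word X) : (winv u ++ u ++ w) ~ w.
Proof. by rewrite catA winv_mul. Qed.

Lemma solve_left (u v : word X) : (u ++ v) ~ [::] -> u ~ winv v.
Proof. by move=> H; rewrite -[u]cats0 -(mul_winv v) catA H. Qed.

Lemma solve_right (u v : word X) : (u ++ v) ~ [::] -> v ~ winv u.
Proof. by move=> H; rewrite -[v]cat0s -(winv_mul u) -catA H cats0. Qed.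

Lemma peq_winv (u v : word X) : u ~ v -> winv u ~ winv v.
Proof. by move=> H; rewrite -[winv u]cats0 -(mul_winv v) -{1}H catA winv_mul. Qed.

Lemma trivial_prefix (u w : word X) : u ~ [::] -> (u ++ w) ~ w.
Proof. by move=> H; rewrite H. Qed.

Lemma rel_cat (u v : word X) : (forall w, (u ++ w) ~ (v ++ w)) ->
  forall s w, (flatten (nseq s u) ++ w) ~ (flatten (nseq s v) ++ w).
Proof.
move=> H; elim=> [|s IH] w //=.
by rewrite -!catA IH H.
Qed.

End GroupLaws.

Add Parametric Morphism (X : Type) (R : word X -> Prop) : (@winv X)
  with signature (peq R) ==> (peq R) as peq_winv_morphism.
Proof. exact: peq_winv. Qed.

(** Commutation calculus.  A conjugation relation x y x^-1 = z is used in
    the form "x y = z x", and then iterated: powers of x move across letters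
    whose indices shift by a fixed amount at each step. *)

Section Commutation.
Variables (X : Type) (R : word X -> Prop).
Local Notation "u ~ v" := (peq R u v) (at level 70).
Local Open Scope ring_scope.

Lemma commute_of_conj (x y z : X) (bx b : bool) :
  (forall w, ((x, bx) :: (y, b) :: (x, ~~ bx) :: w) ~ ((z, b) :: w)) ->
  forall w, ((x, bx) :: (y, b) :: w) ~ ((z, b) :: (x, bx) :: w).
Proof. by move=> conjE w; rewrite -conjE cancel_letterV. Qed.

Lemma commute_inv (x y z : X) (bx b : bool) :
  (forall w, ((x, bx) :: (y, b) :: w) ~ ((z, b) :: (x, bx) :: w)) ->
  forall w, ((x, bx) :: (y, ~~ b) :: w) ~ ((z, ~~ b) :: (x, bx) :: w).
Proof.
move=> comm w.
transitivity ((z, ~~ b) :: (z, b) :: (x, bx) :: (y, ~~ b) :: w).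
  by rewrite cancel_letterV.
by rewrite -comm cancel_letter.
Qed.

Lemma commute_rev (x : X) (bx : bool) (y z : X * bool) :
  (forall w, ((x, bx) :: y :: w) ~ (z :: (x, bx) :: w)) ->
  forall w, ((x, ~~ bx) :: z :: w) ~ (y :: (x, ~~ bx) :: w).
Proof.
move=> comm w; symmetry.
transitivity ((x, ~~ bx) :: (x, bx) :: y :: (x, ~~ bx) :: w).
  by rewrite cancel_letterV.
by rewrite comm cancel_letter.
Qed.

Lemma commute_nseq_block (x y : X * bool) (B : word X) :
  (forall w, (x :: B ++ w) ~ (B ++ y :: w)) ->
  forall s w, (nseq s x ++ B ++ w) ~ (B ++ nseq s y ++ w).
Proof.
move=> comm; elim=> [|s IH] w //=.
by rewrite IH comm.
Qed.

Lemma commute_nseq_shift (x : X * bool) (a : int -> X * bool) (d : int) :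
  (forall i w, (x :: a i :: w) ~ (a (i + d) :: x :: w)) ->
  forall s i w, (nseq s x ++ a i :: w) ~ (a (i + s%:Z * d) :: nseq s x ++ w).
Proof.
move=> comm; elim=> [|s IH] i w.
  by rewrite mul0r addr0.
by rewrite /= IH comm (_ : i + s%:Z * d + d = i + s.+1%:Z * d) //; lia.
Qed.

Lemma commute_nseq_shift_pow (x : X * bool) (a : int -> X * bool) (d : int) :
  (forall i w, (x :: a i :: w) ~ (a (i + d) :: x :: w)) ->
  forall r s i w,
    (nseq s x ++ nseq r (a i) ++ w) ~ (nseq r (a (i + s%:Z * d)) ++ nseq s x ++ w).
Proof.
move=> comm; elim=> [|r IH] s i w //=.
by rewrite (commute_nseq_shift comm) IH.
Qed.

End Commutation.

(** Subscripts mod n: [zidx n a] is the generator index of a : int. *)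

Section CyclicIndices.
Variable n : nat.
Hypothesis n_gt0 : (0 < n)%N.
Local Open Scope ring_scope.

Lemma val_zidx (a : int) : (zidx n a)%:Z = (a %% n)%Z.
Proof.
have mod_ge0 : (0 <= a %% n)%Z by rewrite modz_ge0 // eqz_nat -lt0n.
have mod_lt : (a %% n < n)%Z by rewrite ltz_pmod // ltz_nat.
rewrite /zidx inordK; first by rewrite gez0_abs.
by rewrite prednK //; move: mod_ge0 mod_lt; case: (a %% n)%Z.
Qed.

Lemma val_zidxE (a : int) : (zidx n a)%:Z = a - (a %/ n)%Z * n.
Proof. by have := divz_eq a n; rewrite val_zidx; lia. Qed.

Lemma zidx_val (y : gidx n) : zidx n y = y.
Proof.
apply: val_inj; rewrite /zidx /= modz_small ?inordK //=.
by case: y => /= y; rewrite prednK.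
Qed.

Lemma zidxE (c a b : int) : a = b + c * n -> zidx n a = zidx n b.
Proof. by move=> ->; rewrite /zidx addrC modzMDl. Qed.

Lemma zidx_shift (a b : int) : zidx n ((zidx n a)%:Z + b) = zidx n (a + b).
Proof. by apply: (zidxE (c := - (a %/ n)%Z)); rewrite val_zidxE; lia. Qed.

Lemma zidx_lt (a : int) : (zidx n a < n)%N.
Proof. by have := ltn_ord (zidx n a); case: (n) n_gt0. Qed.

End CyclicIndices.

Lemma val_zidx_small (k s : nat) : (s < k)%N -> zidx k s = s :> nat.
Proof.
move=> s_lt_k; have k_gt0 : (0 < k)%N by case: k s_lt_k.
have := val_zidx k_gt0 s; rewrite modz_small; first by case.
by rewrite ltz_nat s_lt_k.
Qed.

Section CyclicWords.
Variable n : nat.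
Local Open Scope ring_scope.

Definition gx (j : int) : gidx n * bool := (zidx n j, false).
Definition gxi (j : int) : gidx n * bool := (zidx n j, true).

Definition xrun (j : int) (s : nat) : word (gidx n) := mkseq (fun t => gx (j + t%:Z)) s.

Lemma xrunS (j : int) (s : nat) : xrun j s.+1 = xrun j s ++ [:: gx (j + s%:Z)].
Proof. by rewrite /xrun mkseqS cats1. Qed.

Lemma gx_mod (c a b : int) : a = b + c * n -> gx a = gx b.
Proof. by move=> H; rewrite /gx (zidxE H). Qed.

Lemma xrun_mod (c a b : int) (s : nat) : a = b + c * n -> xrun a s = xrun b s.
Proof. by move=> H; apply: eq_mkseq => t; apply: (gx_mod (c := c)); lia. Qed.

Hypothesis n_gt0 : (0 < n)%N.

Lemma wshift_gx (i : nat) (a : int) : wshift i [:: gx a] = [:: gx (a + i%:Z)].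
Proof. by rewrite /wshift /wsubst /= zidx_shift. Qed.

Lemma wshift_cat (i : nat) (u v : word (gidx n)) :
  wshift i (u ++ v) = wshift i u ++ wshift i v.
Proof. exact: wsubst_cat. Qed.

Lemma wshift_xrun (i : nat) (j : int) (s : nat) : wshift i (xrun j s) = xrun (j + i%:Z) s.
Proof.
elim: s => [|s IH] //.
rewrite !xrunS wshift_cat IH wshift_gx.
by congr (_ ++ [:: gx _]); lia.
Qed.

End CyclicWords.

(** H_n(m,k) = L_n(p,...,p). *)

Section HIsL.
Variables n m k p : nat.
Hypothesis n_gt0 : (0 < n)%N.
Local Notation RH := (cyc_rel (H_word n m k)).
Local Notation RL := (cyc_rel (L_word n (nseq k p))).
Local Notation gx := (gx n).
Local Notation gxi := (gxi n).
Local Notation xrun := (xrun n).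
Local Open Scope ring_scope.

Lemma H_relatorP (r : word (gidx n)) :
  RH r <-> exists j : int, r = [:: gx j; gx (j + m%:Z); gxi (j + k%:Z)].
Proof.
have shiftE (i : nat) : wshift i (H_word n m k) =
    [:: gx (1 + i%:Z); gx (1 + i%:Z + m%:Z); gxi (1 + i%:Z + k%:Z)].
  rewrite /wshift /H_word /wsubst /= !zidx_shift //.
  by rewrite /gx /gxi; congr [:: (zidx n _, _); (zidx n _, _); (zidx n _, _)]; lia.
split=> [[i [_ ->]] | [j ->]]; first by exists (1 + i%:Z); rewrite shiftE.
exists (zidx n (j - 1)); split; first exact: zidx_lt.
rewrite shiftE val_zidxE // /gx /gxi; congr [:: (_, _); (_, _); (_, _)];
  by apply: (zidxE (c := ((j - 1) %/ n)%Z)); lia.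
Qed.

Lemma H_rel_m (j : int) : peq RH [:: gxi j; gx (j + k%:Z)] [:: gx (j + m%:Z)].
Proof.
have rel : peq RH [:: gx j; gx (j + m%:Z); gxi (j + k%:Z)] [::].
  by apply: peq_rel; apply/H_relatorP; exists j.
have -> : [:: gx (j + k%:Z)] = winv [:: gxi (j + k%:Z)] by [].
rewrite -(solve_left (u := [:: gx j; gx (j + m%:Z)]) rel).
exact: cancel_inv_gen.
Qed.

Lemma H_rel_j (j : int) : peq RH [:: gx (j + m%:Z); gxi (j + k%:Z)] [:: gxi j].
Proof.
have rel : peq RH [:: gx j; gx (j + m%:Z); gxi (j + k%:Z)] [::].
  by apply: peq_rel; apply/H_relatorP; exists j.
exact: (solve_right (u := [:: gx j]) rel).
Qed.

Hypothesis p_mod : (p%:Z = k%:Z - m%:Z - 1 %[mod n])%Z.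

Lemma p_eq : exists c : int, p%:Z = k%:Z - m%:Z - 1 + c * n.
Proof.
exists ((p%:Z %/ n)%Z - ((k%:Z - m%:Z - 1) %/ n)%Z).
by have := divz_eq p n; have := divz_eq (k%:Z - m%:Z - 1) n; rewrite p_mod; lia.
Qed.

Lemma L_wordE :
  L_word n (nseq k p) = xrun p k ++ [:: gx (k%:Z - 1)] ++ winv (xrun (p%:Z + 1) k).
Proof.
rewrite /L_word size_nseq /xrun /mkseq; congr (_ ++ _ ++ winv _).
- by apply/eq_in_map => t; rewrite mem_iota => /andP[_ t_lt]; rewrite nth_nseq t_lt.
- apply/eq_in_map => t; rewrite mem_iota => /andP[_ t_lt]; rewrite nth_nseq t_lt.
  by rewrite /gx; congr (zidx n _, _); lia.
Qed.

(* Since p = k - m - 1 mod n, the relators of L_n(p,...,p) say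
   x_j ... x_(j+k-1) x_(j+m) = x_(j+1) ... x_(j+k). *)
Lemma L_relatorP (r : word (gidx n)) :
  RL r <-> exists j : int, r = xrun j k ++ [:: gx (j + m%:Z)] ++ winv (xrun (j + 1) k).
Proof.
have [c pE] := p_eq.
have shiftE (i : nat) : wshift i (L_word n (nseq k p)) =
    xrun (p%:Z + i%:Z) k ++ [:: gx (k%:Z - 1 + i%:Z)] ++ winv (xrun (p%:Z + 1 + i%:Z) k).
  by rewrite L_wordE !wshift_cat /wshift wsubst_winv -!/(wshift _ _) !wshift_xrun // wshift_gx.
split=> [[i [_ ->]] | [j ->]].
  exists (p%:Z + i%:Z); rewrite shiftE; congr (_ ++ [:: _] ++ winv _).
  - by apply: (gx_mod (c := - c)); lia.
  - by apply: (xrun_mod (c := 0)); lia.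
exists (zidx n (j - p%:Z)); split; first exact: zidx_lt.
rewrite shiftE val_zidxE //; set q := (_ %/ _)%Z.
congr (_ ++ [:: _] ++ winv _).
- by apply: (xrun_mod (c := q)); lia.
- by apply: (gx_mod (c := q + c)); lia.
- by apply: (xrun_mod (c := q)); lia.
Qed.

Lemma L_step (j : int) : peq RL (xrun j k ++ [:: gx (j + m%:Z)]) (xrun (j + 1) k).
Proof.
have rel : peq RL (xrun j k ++ [:: gx (j + m%:Z)] ++ winv (xrun (j + 1) k)) [::].
  by apply: peq_rel; apply/L_relatorP; exists j.
by rewrite catA in rel; have := solve_left rel; rewrite winvK.
Qed.

Lemma L_run (j : int) (s : nat) :
  peq RL (xrun j k ++ xrun (j + m%:Z) s) (xrun (j + s%:Z) k).
Proof.
elim: s => [|s IH]; first by rewrite cats0 addr0.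
rewrite xrunS catA IH (_ : gx (j + m%:Z + s%:Z) = gx (j + s%:Z + m%:Z)).
  by rewrite L_step (_ : j + s%:Z + 1 = j + s.+1%:Z) //; lia.
by congr (gx _); lia.
Qed.

Definition H_to_L (y : gidx n) : word (gidx n) := xrun (y%:Z - m%:Z) k.

Definition L_to_H (y : gidx n) : word (gidx n) := [:: (y, true); gx (y%:Z + 1)].

Lemma H_to_LE (a : int) : H_to_L (zidx n a) = xrun (a - m%:Z) k.
Proof.
by apply: (xrun_mod (c := - (a %/ n)%Z)); rewrite val_zidxE //; lia.
Qed.

Lemma L_to_HE (a : int) : L_to_H (zidx n a) = [:: gxi a; gx (a + 1)].
Proof. by rewrite /L_to_H /gx zidx_shift. Qed.

Lemma L_to_H_xrun (R : word (gidx n) -> Prop) (j : int) (s : nat) :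
  peq R (wsubst L_to_H (xrun j s)) [:: gxi j; gx (j + s%:Z)].
Proof.
elim: s => [|s IH]; first by rewrite addr0 cancel_inv_gen.
rewrite xrunS wsubst_cat IH wsubst_gen L_to_HE /= cancel_gen_inv.
by rewrite (_ : j + s%:Z + 1 = j + s.+1%:Z) //; lia.
Qed.

Lemma H_to_L_relators (r : word (gidx n)) : RH r -> peq RL (wsubst H_to_L r) [::].
Proof.
case/H_relatorP => j ->.
rewrite /wsubst /= cats0 -/(H_to_L _) !H_to_LE.
rewrite (xrun_mod (c := 0) (a := j + m%:Z - m%:Z) (b := j - m%:Z + m%:Z)); last lia.
rewrite catA L_run (xrun_mod (c := 0) (b := j + k%:Z - m%:Z)); last lia.
exact: mul_winv.
Qed.

Lemma L_to_H_relators (r : word (gidx n)) : RL r -> peq RH (wsubst L_to_H r) [::].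
Proof.
case/L_relatorP => j ->.
rewrite !wsubst_cat wsubst_winv wsubst_gen !L_to_H_xrun L_to_HE /=.
rewrite -[[:: gxi j, _ & _]]/([:: gxi j; gx (j + k%:Z)] ++ _) H_rel_m /=.
rewrite cancel_gen_inv (_ : gx (j + m%:Z + 1) = gx (j + 1 + m%:Z)); last by congr (gx _); lia.
rewrite -[[:: gx (j + 1 + m%:Z), _ & _]]/([:: gx (j + 1 + m%:Z); gxi (j + 1 + k%:Z)] ++ _).
by rewrite H_rel_j /= cancel_inv_gen.
Qed.

Lemma H_to_L_to_H (y : gidx n) : peq RH (wsubst L_to_H (H_to_L y)) [:: (y, false)].
Proof.
rewrite L_to_H_xrun H_rel_m.
by rewrite (_ : y%:Z - m%:Z + m%:Z = y) ?/gx ?zidx_val //; lia.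
Qed.

Lemma L_to_H_to_L (y : gidx n) : peq RL (wsubst H_to_L (L_to_H y)) [:: (y, false)].
Proof.
rewrite /L_to_H /wsubst /= cats0 -!/(H_to_L _) H_to_LE.
rewrite (xrun_mod (c := 0) (b := y%:Z - m%:Z + 1)); last lia.
rewrite -L_step (_ : y%:Z - m%:Z + m%:Z = y); last lia.
by rewrite catA winv_mul /gx zidx_val.
Qed.

Lemma H_iso_L : pres_iso RH RL.
Proof.
exists H_to_L, L_to_H; split.
- exact: H_to_L_relators.
- exact: L_to_H_relators.
- exact: H_to_L_to_H.
- exact: L_to_H_to_L.
Qed.

End HIsL.

(** The natural HNN extension of H_n(m,k) is a LOG group. *)

Section HNNExtensionIsLOG.
Variables n m k : nat.
Hypothesis n_gt0 : (0 < n)%N.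
Hypothesis k_gt0 : (0 < k)%N.
Local Notation RHNN := (hnn_rel (cyc_rel (H_word n m k)) (@cyc_shift n)).
Local Notation RLOG := (log_rel (@log_iota n k) (@log_tau n k) (@log_lam n m k)).
Local Notation V := (logV n k).
Local Open Scope ring_scope.

Section HNNRelations.
Local Notation "u ~ v" := (peq RHNN u v) (at level 70).

Definition hx (j : int) : option (gidx n) * bool := (Some (zidx n j), false).
Definition hxi (j : int) : option (gidx n) * bool := (Some (zidx n j), true).
Definition ht : option (gidx n) * bool := (None, false).
Definition hti : option (gidx n) * bool := (None, true).

Lemma hx_mod (c a b : int) : a = b + c * n -> hx a = hx b.
Proof. by move=> H; rewrite /hx (zidxE H). Qed.

Lemma hxi_mod (c a b : int) : a = b + c * n -> hxi a = hxi b.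
Proof. by move=> H; rewrite /hxi (zidxE H). Qed.

Lemma HNN_mul (j : int) (w : word (option (gidx n))) :
  (hx j :: hx (j + m%:Z) :: w) ~ (hx (j + k%:Z) :: w).
Proof.
have rel : [:: hx j; hx (j + m%:Z); hxi (j + k%:Z)] ~ [::].
  apply: peq_rel; left; exists [:: gx n j; gx n (j + m%:Z); gxi n (j + k%:Z)].
  by split=> //; apply/(H_relatorP _ _ n_gt0); exists j.
transitivity (hx j :: hx (j + m%:Z) :: hxi (j + k%:Z) :: hx (j + k%:Z) :: w).
  by rewrite cancel_inv_gen.
exact: (trivial_prefix (hx (j + k%:Z) :: w) rel).
Qed.

Lemma HNN_solve_m (j : int) (w : word (option (gidx n))) :
  (hxi j :: hx (j + k%:Z) :: w) ~ (hx (j + m%:Z) :: w).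
Proof. by rewrite -HNN_mul cancel_inv_gen. Qed.

Lemma HNN_solve_mi (j : int) (w : word (option (gidx n))) :
  (hxi (j + k%:Z) :: hx j :: w) ~ (hxi (j + m%:Z) :: w).
Proof.
transitivity (hxi (j + k%:Z) :: hx j :: hx (j + m%:Z) :: hxi (j + m%:Z) :: w).
  by rewrite cancel_gen_inv.
by rewrite HNN_mul cancel_inv_gen.
Qed.

Lemma t_x (j : int) (w : word (option (gidx n))) : (ht :: hx j :: w) ~ (hx (j + 1) :: ht :: w).
Proof.
apply: (commute_of_conj (x := None) (bx := false) (b := false)) => {}w.
have rel : [:: ht; hx j; hti; hxi (j + 1)] ~ [::].
  by apply: peq_rel; right; exists (zidx n j); rewrite /cyc_shift zidx_shift.
transitivity (ht :: hx j :: hti :: hxi (j + 1) :: hx (j + 1) :: w).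
  by rewrite cancel_inv_gen.
exact: (trivial_prefix (hx (j + 1) :: w) rel).
Qed.

Lemma t_xi (j : int) (w : word (option (gidx n))) :
  (ht :: hxi j :: w) ~ (hxi (j + 1) :: ht :: w).
Proof. exact: (commute_inv (x := None) (bx := false) (b := false) (t_x j)). Qed.

Lemma ti_x (j : int) (w : word (option (gidx n))) :
  (hti :: hx j :: w) ~ (hx (j - 1) :: hti :: w).
Proof.
have := commute_rev (x := None) (bx := false) (t_x (j - 1)) w.
by rewrite (_ : j - 1 + 1 = j) //; lia.
Qed.

Lemma ti_xi (j : int) (w : word (option (gidx n))) :
  (hti :: hxi j :: w) ~ (hxi (j - 1) :: hti :: w).
Proof.
have := commute_rev (x := None) (bx := false) (t_xi (j - 1)) w.
by rewrite (_ : j - 1 + 1 = j) //; lia.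
Qed.

Lemma x_t (j : int) (w : word (option (gidx n))) : (hx j :: ht :: w) ~ (ht :: hx (j - 1) :: w).
Proof. by rewrite t_x (_ : j - 1 + 1 = j) //; lia. Qed.

Lemma tpow_x (s : nat) (j : int) (w : word (option (gidx n))) :
  (nseq s ht ++ hx j :: w) ~ (hx (j + s%:Z) :: nseq s ht ++ w).
Proof. by have := commute_nseq_shift t_x s j w; rewrite mulr1. Qed.

Lemma tpow_xi (s : nat) (j : int) (w : word (option (gidx n))) :
  (nseq s ht ++ hxi j :: w) ~ (hxi (j + s%:Z) :: nseq s ht ++ w).
Proof. by have := commute_nseq_shift t_xi s j w; rewrite mulr1. Qed.

Lemma tipow_x (s : nat) (j : int) (w : word (option (gidx n))) :
  (nseq s hti ++ hx j :: w) ~ (hx (j - s%:Z) :: nseq s hti ++ w).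
Proof.
have := commute_nseq_shift (d := -1) ti_x s j w.
by rewrite (_ : j + s%:Z * -1 = j - s%:Z) //; lia.
Qed.

End HNNRelations.

Section LOGRelations.
Local Notation "u ~ v" := (peq RLOG u v) (at level 70).

Definition la (j : int) : V * bool := (inl (zidx n j), false).
Definition lai (j : int) : V * bool := (inl (zidx n j), true).
Definition ltj (j : int) : V * bool := (inr (zidx k j), false).
Definition lt0 : V * bool := ltj 0.
Definition lt0i : V * bool := (inr (zidx k 0), true).

(* The subscript m-k+1 of the label of the edges t_j -> t_(j+1). *)
Definition lab : int := m%:Z - k%:Z + 1.

Definition apow (d : int) : word V := nseq k (la d).
Definition apowi (d : int) : word V := nseq k (lai d).

Lemma winv_apow (d : int) : winv (apow d) = apowi d.
Proof. exact: winv_nseq. Qed.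

Lemma la_mod (c a b : int) : a = b + c * n -> la a = la b.
Proof. by move=> H; rewrite /la (zidxE H). Qed.

Lemma apow_mod (c a b : int) : a = b + c * n -> apow a = apow b.
Proof. by move=> H; rewrite /apow (la_mod H). Qed.

Lemma t0i_a (i : int) (w : word V) : (lt0i :: la i :: w) ~ (la (i + 1) :: lt0i :: w).
Proof.
apply: (commute_of_conj (bx := true) (b := false)) => {}w.
have rel : [:: lt0i; la i; lt0; lai (i + 1)] ~ [::].
  by apply: peq_rel; exists (inl (zidx n i)); rewrite /log_tau /= zidx_shift.
transitivity (lt0i :: la i :: lt0 :: lai (i + 1) :: la (i + 1) :: w).
  by rewrite cancel_inv_gen.
exact: (trivial_prefix (la (i + 1) :: w) rel).
Qed.

Lemma t0i_ai (i : int) (w : word V) : (lt0i :: lai i :: w) ~ (lai (i + 1) :: lt0i :: w).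
Proof. exact: (commute_inv (bx := true) (b := false) (t0i_a i)). Qed.

Lemma t0_a (i : int) (w : word V) : (lt0 :: la i :: w) ~ (la (i - 1) :: lt0 :: w).
Proof.
have := commute_rev (x := inr (zidx k 0)) (bx := true) (t0i_a (i - 1)) w.
by rewrite (_ : i - 1 + 1 = i) //; lia.
Qed.

Lemma t0_ai (i : int) (w : word V) : (lt0 :: lai i :: w) ~ (lai (i - 1) :: lt0 :: w).
Proof.
have := commute_rev (x := inr (zidx k 0)) (bx := true) (t0i_ai (i - 1)) w.
by rewrite (_ : i - 1 + 1 = i) //; lia.
Qed.

Lemma t0ipow_apow (s : nat) (d : int) (w : word V) :
  (nseq s lt0i ++ apow d ++ w) ~ (apow (d + s%:Z) ++ nseq s lt0i ++ w).
Proof. by have := commute_nseq_shift_pow t0i_a k s d w; rewrite mulr1. Qed.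

Lemma t0pow_apow (s : nat) (d : int) (w : word V) :
  (nseq s lt0 ++ apow d ++ w) ~ (apow (d - s%:Z) ++ nseq s lt0 ++ w).
Proof.
have := commute_nseq_shift_pow (d := -1) t0_a k s d w.
by rewrite (_ : d + s%:Z * -1 = d - s%:Z) //; lia.
Qed.

Lemma t0pow_apowi (s : nat) (d : int) (w : word V) :
  (nseq s lt0 ++ apowi d ++ w) ~ (apowi (d - s%:Z) ++ nseq s lt0 ++ w).
Proof.
have := commute_nseq_shift_pow (d := -1) t0_ai k s d w.
by rewrite (_ : d + s%:Z * -1 = d - s%:Z) //; lia.
Qed.

Lemma t0_apow_step (d : int) (w : word V) : (lt0 :: apow d ++ w) ~ (apow (d - 1) ++ lt0 :: w).
Proof. exact: (t0pow_apow 1). Qed.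

Lemma t0i_apow_step (d : int) (w : word V) : (lt0i :: apow d ++ w) ~ (apow (d + 1) ++ lt0i :: w).
Proof. exact: (t0ipow_apow 1). Qed.

Lemma lab_conj_t (s : nat) (w : word V) : (s.+1 < k)%N ->
  (lai lab :: ltj s :: la lab :: w) ~ (ltj (s%:Z + 1) :: w).
Proof.
move=> s_lt.
have rel : [:: lai lab; ltj s; la lab; (inr (zidx k (s%:Z + 1)), true)] ~ [::].
  apply: peq_rel; exists (inr (zidx k s)).
  by rewrite /log_tau /log_lam /log_iota val_zidx_small ?s_lt //; apply: ltnW.
transitivity (lai lab :: ltj s :: la lab ::
              (inr (zidx k (s%:Z + 1)), true) :: ltj (s%:Z + 1) :: w).
  by rewrite cancel_inv_gen.
exact: (trivial_prefix (ltj (s%:Z + 1) :: w) rel).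
Qed.

Lemma lab_conj_t_last (w : word V) : (lai lab :: ltj k.-1 :: la lab :: w) ~ (la 1 :: w).
Proof.
have rel : [:: lai lab; ltj k.-1; la lab; lai 1] ~ [::].
  apply: peq_rel; exists (inr (zidx k k.-1)).
  rewrite /log_tau /log_lam /log_iota val_zidx_small; last by rewrite prednK.
  by rewrite prednK // ltnn.
transitivity (lai lab :: ltj k.-1 :: la lab :: lai 1 :: la 1 :: w).
  by rewrite cancel_inv_gen.
exact: (trivial_prefix (la 1 :: w) rel).
Qed.

Lemma lab_pow_conj_t0 (s : nat) (w : word V) : (s < k)%N ->
  (nseq s (lai lab) ++ lt0 :: nseq s (la lab) ++ w) ~ (ltj s :: w).
Proof.
elim: s w => [|s IH] w s_lt //.
rewrite [nseq s.+1 (la lab)]nseqSr -catA /= (IH (la lab :: w)); last exact: ltnW.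
by rewrite lab_conj_t // (_ : s%:Z + 1 = s.+1%:Z) //; lia.
Qed.

Lemma lab_k_conj_t0 (w : word V) : (apowi lab ++ lt0 :: apow lab ++ w) ~ (la 1 :: w).
Proof.
have nseqE (A : Type) (x : A) : nseq k x = x :: nseq k.-1 x.
  by rewrite -{1}(prednK k_gt0).
have nseqEr (A : Type) (x : A) : nseq k x = nseq k.-1 x ++ [:: x].
  by rewrite -{1}(prednK k_gt0) nseqSr.
rewrite /apowi /apow nseqE (nseqEr _ (la lab)) -catA /=.
by rewrite (lab_pow_conj_t0 (la lab :: w)) ?prednK // lab_conj_t_last.
Qed.

(* Key identity: t_0 a_d^k = a_d^k a_(d-lab+1) for every d.  For d = lab this
   is the previous lemma; conjugation by t_0 propagates it to all d mod n. *)
Lemma t0_apow (d : int) (w : word V) :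
  (lt0 :: apow d ++ w) ~ (apow d ++ la (d - lab + 1) :: w).
Proof.
have base w' : (lt0 :: apow lab ++ w') ~ (apow lab ++ la (lab - lab + 1) :: w').
  transitivity (apow lab ++ apowi lab ++ lt0 :: apow lab ++ w').
    by symmetry; apply: cancel_nseq_gen_inv.
  by rewrite lab_k_conj_t0 (_ : lab - lab + 1 = 1) //; lia.
have conjE d' w' : (apow (d' + 1) ++ w') ~ (lt0i :: apow d' ++ lt0 :: w').
  by rewrite t0i_apow_step cancel_inv_gen.
have step d' : (forall w', (lt0 :: apow d' ++ w') ~ (apow d' ++ la (d' - lab + 1) :: w')) ->
    forall w', (lt0 :: apow (d' + 1) ++ w') ~ (apow (d' + 1) ++ la (d' + 1 - lab + 1) :: w').
  move=> IH w'; rewrite !conjE cancel_gen_inv t0_a.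
  rewrite (_ : d' + 1 - lab + 1 - 1 = d' - lab + 1); last lia.
  by rewrite -IH cancel_inv_gen.
set s := nat_of_ord (zidx n (d - lab)).
have sE : s%:Z = d - lab - ((d - lab) %/ n)%Z * n by rewrite val_zidxE.
rewrite (apow_mod (c := ((d - lab) %/ n)%Z) (b := lab + s%:Z)); last lia.
rewrite (la_mod (c := ((d - lab) %/ n)%Z) (b := lab + s%:Z - lab + 1)); last lia.
elim: s {sE} w => [|s IH] w; first by rewrite addr0; apply: base.
by rewrite (_ : lab + s.+1%:Z = lab + s%:Z + 1); [apply: step | lia].
Qed.

End LOGRelations.

Definition HNN_to_LOG (x : option (gidx n)) : word V :=
  if x is Some y then apow (m%:Z + lab - y%:Z) ++ nseq k lt0i else [:: lt0].

Definition tj_image (j : nat) : word (option (gidx n)) :=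
  hxi 0 :: nseq j hti ++ [:: hx 0; ht; hxi 0] ++ nseq j ht ++ [:: hx 0].

Definition LOG_to_HNN (v : V) : word (option (gidx n)) :=
  match v with
  | inl y => [:: hxi (lab - y%:Z); ht; hx (lab - y%:Z)]
  | inr j => tj_image j
  end.

Lemma apow_zidx (c a : int) : apow (c - (zidx n a)%:Z) = apow (c - a).
Proof. by apply: (apow_mod (c := (a %/ n)%Z)); rewrite val_zidxE //; lia. Qed.

Lemma apowi_zidx (c a : int) : apowi (c - (zidx n a)%:Z) = apowi (c - a).
Proof. by rewrite -!winv_apow apow_zidx. Qed.

Lemma HNN_to_LOGE (a : int) :
  HNN_to_LOG (Some (zidx n a)) = apow (m%:Z + lab - a) ++ nseq k lt0i.
Proof. by rewrite /= apow_zidx. Qed.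

Lemma LOG_to_HNN_aE (a : int) :
  LOG_to_HNN (inl (zidx n a)) = [:: hxi (lab - a); ht; hx (lab - a)].
Proof.
have shiftE : lab - (zidx n a)%:Z = lab - a + (a %/ n)%Z * n.
  by rewrite val_zidxE //; lia.
by rewrite /= (hx_mod shiftE) (hxi_mod shiftE).
Qed.

Lemma LOG_to_HNN_tE (s : nat) : (s < k)%N -> LOG_to_HNN (inr (zidx k s)) = tj_image s.
Proof. by move=> s_lt; rewrite /= val_zidx_small. Qed.

Lemma t0k_apow (c : int) (w : word V) :
  peq RLOG (nseq k lt0 ++ apow c ++ w) (apow c ++ apow (c - lab + 1) ++ w).
Proof. exact: (commute_nseq_block (fun w => t0_apow c w)). Qed.

(* ... and the image of a conjugate x_y^-1 t x_y is a single letter. *)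
Lemma conj_apow_t0 (d : int) (w : word V) :
  peq RLOG (nseq k lt0 ++ apowi d ++ lt0 :: apow d ++ nseq k lt0i ++ w)
           (la (d - k%:Z - lab + 1) :: w).
Proof.
rewrite t0pow_apowi nseq_swap t0pow_apow cancel_nseq_gen_inv t0_apow.
by rewrite cancel_nseq_inv_gen.
Qed.

Lemma HNN_to_LOG_relators (r : word (option (gidx n))) :
  RHNN r -> peq RLOG (wsubst HNN_to_LOG r) [::].
Proof.
case=> [[r0 [/(H_relatorP _ _ n_gt0) [j ->] ->]] | [y ->]].
  rewrite /liftw /wsubst /= cats0 !apow_zidx winv_cat winv_nseq winv_apow /= -!catA.
  rewrite cancel_nseq_inv_gen t0ipow_apow.
  rewrite (_ : m%:Z + lab - (j + m%:Z) + k%:Z = m%:Z + lab - j - lab + 1);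
    last by rewrite /lab; lia.
  rewrite -t0k_apow t0pow_apow (_ : m%:Z + lab - (j + k%:Z) = m%:Z + lab - j - k%:Z); last lia.
  by rewrite cancel_nseq_gen_inv -winv_apow mul_winv.
rewrite wsubst_cat wsubst_winv /cyc_shift /liftw /= wsubst_gen winv_cat winv_nseq /=.
rewrite winv_apow /= -/(apow _) -!catA nseq_swap cancel_nseq_inv_gen.
rewrite (_ : m%:Z + lab - y%:Z = m%:Z + lab - (y%:Z + 1) + 1); last lia.
rewrite apowi_zidx t0_apow_step cancel_gen_inv.
rewrite (_ : m%:Z + lab - (y%:Z + 1) + 1 - 1 = m%:Z + lab - (y%:Z + 1)); last lia.
by rewrite -winv_apow mul_winv.
Qed.

Lemma tj_image0 (w : word (option (gidx n))) : peq RHNN (tj_image 0 ++ w) (ht :: w).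
Proof. by rewrite /tj_image /= !cancel_inv_gen. Qed.

Lemma tj_image0_inv (w : word (option (gidx n))) :
  peq RHNN (winv (tj_image 0) ++ w) (hti :: w).
Proof. by rewrite /tj_image /= !cancel_inv_gen. Qed.

Lemma tj_imageS (s : nat) (w : word (option (gidx n))) :
  peq RHNN (winv [:: hxi 0; ht; hx 0] ++ tj_image s ++ [:: hxi 0; ht; hx 0] ++ w)
           (tj_image s.+1 ++ w).
Proof. by rewrite /tj_image /= -!catA /= cancel_gen_inv -!catA /= cancel_gen_inv nseq_swap. Qed.

(* The image of t_k is the image of a_1: this is where the relation
   x_j x_(j+m) = x_(j+k) of H_n(m,k) enters. *)
Lemma tj_image_k (w : word (option (gidx n))) :
  peq RHNN (tj_image k ++ w) (hxi (lab - 1) :: ht :: hx (lab - 1) :: w).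
Proof.
have move_xi w' : peq RHNN (hxi 0 :: nseq k ht ++ w') (nseq k ht ++ hxi (0 - k%:Z) :: w').
  by rewrite tpow_xi (_ : 0 - k%:Z + k%:Z = 0) //; lia.
have rel_mi w' : peq RHNN (hxi 0 :: hx (0 - k%:Z) :: w') (hxi (0 - k%:Z + m%:Z) :: w').
  by rewrite -HNN_solve_mi (_ : 0 - k%:Z + k%:Z = 0) //; lia.
have rel_m w' : peq RHNN (hxi (0 - k%:Z) :: hx 0 :: w') (hx (0 - k%:Z + m%:Z) :: w').
  by rewrite -HNN_solve_m (_ : 0 - k%:Z + k%:Z = 0) //; lia.
rewrite /tj_image /= -!catA /= tipow_x -catA /= move_xi -nseq_swap cancel_nseq_inv_gen.
by rewrite rel_mi rel_m (_ : 0 - k%:Z + m%:Z = lab - 1) // /lab; lia.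
Qed.

Lemma LOG_to_HNN_a_relator (y : gidx n) :
  peq RHNN (wsubst LOG_to_HNN [:: (inr (zidx k 0), true); (inl y, false);
                                  (inr (zidx k 0), false); (inl (zidx n (y%:Z + 1)), true)]) [::].
Proof.
have -> : (inl y : V) = inl (zidx n y) by rewrite zidx_val.
rewrite wsubst_conj_inv.
rewrite LOG_to_HNN_tE // !LOG_to_HNN_aE -[X in peq _ X _]cats0 -catA tj_image0_inv tj_image0 /=.
rewrite ti_xi cancel_inv_gen x_t (_ : lab - y%:Z - 1 = lab - (y%:Z + 1)); last lia.
by rewrite cancel_gen_inv cancel_gen_inv cancel_inv_gen.
Qed.

Lemma LOG_to_HNN_t_relator (j : gidx k) :
  peq RHNN (wsubst LOG_to_HNN [:: (inl (zidx n lab), true); (inr j, false);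
                                  (inl (zidx n lab), false); (log_tau (inr j), true)]) [::].
Proof.
rewrite wsubst_conj_inv LOG_to_HNN_aE subrr -[X in peq _ X _]cats0 -!catA.
rewrite [LOG_to_HNN (inr j)]/= tj_imageS /log_tau; case: ifP => j_lt.
  rewrite (_ : j%:Z + 1 = j.+1); last lia.
  by rewrite (LOG_to_HNN_tE j_lt) cats0 mul_winv.
have -> : j.+1 = k.
  by move/negbT: j_lt; rewrite -leqNgt; have := ltn_ord j; have := prednK k_gt0; lia.
rewrite LOG_to_HNN_aE tj_image_k cats0.
exact: (mul_winv _ [:: hxi (lab - 1); ht; hx (lab - 1)]).
Qed.

Lemma LOG_to_HNN_relators (r : word V) : RLOG r -> peq RHNN (wsubst LOG_to_HNN r) [::].
Proof. by case=> [[y | j] ->]; [apply: LOG_to_HNN_a_relator | apply: LOG_to_HNN_t_relator]. Qed.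

Lemma LOG_HNN_LOG_a (y : gidx n) :
  peq RLOG (wsubst HNN_to_LOG (LOG_to_HNN (inl y))) [:: (inl y, false)].
Proof.
rewrite [LOG_to_HNN _]/= wsubst_conj HNN_to_LOGE winv_cat winv_apow winv_nseq /=.
rewrite -[X in peq _ X _]cats0 -!catA /= -!catA conj_apow_t0.
by rewrite (_ : m%:Z + lab - (lab - y%:Z) - k%:Z - lab + 1 = y) ?/la ?zidx_val // /lab; lia.
Qed.

Local Notation x0_image := (HNN_to_LOG (Some (zidx n 0))).

Lemma t0_x0_image (w : word V) : peq RLOG (lt0 :: x0_image ++ w) (x0_image ++ la lab :: w).
Proof.
transitivity (x0_image ++ winv x0_image ++ lt0 :: x0_image ++ w).
  by rewrite catA mul_winv.
rewrite HNN_to_LOGE winv_cat winv_apow winv_nseq /= -!catA /= conj_apow_t0.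
by rewrite (_ : m%:Z + lab - 0 - k%:Z - lab + 1 = lab) // /lab; lia.
Qed.

Lemma t0i_x0_image (w : word V) : peq RLOG (lt0i :: x0_image ++ w) (x0_image ++ lai lab :: w).
Proof.
symmetry; transitivity (lt0i :: lt0 :: x0_image ++ lai lab :: w).
  by rewrite cancel_inv_gen.
by rewrite t0_x0_image cancel_gen_inv.
Qed.

Lemma wsubst_tj_image (j : nat) : wsubst HNN_to_LOG (tj_image j) =
  winv x0_image ++ nseq j lt0i ++ x0_image ++ lt0 :: winv x0_image ++ nseq j lt0 ++ x0_image.
Proof.
have -> : tj_image j = [:: hxi 0] ++ nseq j hti ++ [:: hx 0; ht; hxi 0] ++ nseq j ht ++ [:: hx 0].
  by [].
rewrite !wsubst_cat wsubst_nseq_inv wsubst_nseq_gen /wsubst /= !cats0.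
by rewrite -!catA -[winv [:: lt0]]/[:: lt0i] !flatten_nseq1.
Qed.

Lemma LOG_HNN_LOG_t (j : gidx k) :
  peq RLOG (wsubst HNN_to_LOG (LOG_to_HNN (inr j))) [:: (inr j, false)].
Proof.
rewrite [LOG_to_HNN _]/= wsubst_tj_image (commute_nseq_block t0i_x0_image).
rewrite -(cats0 (nseq j lt0 ++ x0_image)) -catA (commute_nseq_block t0_x0_image).
rewrite !winv_mul_cat (lab_pow_conj_t0 [::]); last by have := ltn_ord j; have := prednK k_gt0; lia.
by rewrite /ltj zidx_val.
Qed.

Lemma LOG_HNN_LOG (v : V) : peq RLOG (wsubst HNN_to_LOG (LOG_to_HNN v)) [:: (v, false)].
Proof. by case: v => [y | j]; [apply: LOG_HNN_LOG_a | apply: LOG_HNN_LOG_t]. Qed.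

(* HNN -> LOG -> HNN is the identity: x_y |-> (x_(y-m)^-1 t x_(y-m))^k t^-k
   = x_(y-m)^-1 x_(y-m+k) = x_y. *)
Lemma HNN_LOG_HNN (x : option (gidx n)) :
  peq RHNN (wsubst LOG_to_HNN (HNN_to_LOG x)) [:: (x, false)].
Proof.
case: x => [y |]; last by rewrite wsubst_gen -[X in peq _ X _]cats0 (LOG_to_HNN_tE k_gt0) tj_image0.
set e := lab - (m%:Z + lab - y%:Z).
have conj_pow s w : peq RHNN (flatten (nseq s [:: hxi e; ht; hx e]) ++ w)
                          (hxi e :: nseq s ht ++ hx e :: w).
  by elim: s w => [|s IH] w /=; rewrite ?cancel_inv_gen // IH cancel_gen_inv.
have tinv_pow s w : peq RHNN (flatten (nseq s (winv (tj_image 0))) ++ w) (nseq s hti ++ w).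
  by rewrite (rel_cat (v := [:: hti]) tj_image0_inv) flatten_nseq1.
rewrite /= wsubst_cat /apow /la wsubst_nseq_gen wsubst_nseq_inv -/(la _) LOG_to_HNN_aE.
rewrite (LOG_to_HNN_tE k_gt0) -[X in peq _ X _]cats0 -catA tinv_pow conj_pow tpow_x.
rewrite cancel_nseq_gen_inv.
by rewrite HNN_solve_m (_ : e + m%:Z = y) ?/hx ?zidx_val // /e; lia.
Qed.

Lemma HNN_iso_LOG : pres_iso RHNN RLOG.
Proof.
exists HNN_to_LOG, LOG_to_HNN; split.
- exact: HNN_to_LOG_relators.
- exact: LOG_to_HNN_relators.
- exact: HNN_LOG_HNN.
- exact: LOG_HNN_LOG.
Qed.

End HNNExtensionIsLOG.

Theorem corollary3p4 (n m k p : nat) :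
  (2 <= n)%N -> (1 <= m <= n)%N -> (1 <= k <= n)%N ->
  (p < n)%N -> (Posz p = Posz k - Posz m - 1 %[mod Posz n])%Z ->
  pres_iso (cyc_rel (H_word n m k)) (cyc_rel (L_word n (nseq k p))) /\
  pres_iso (hnn_rel (cyc_rel (H_word n m k)) (@cyc_shift n))
           (log_rel (@log_iota n k) (@log_tau n k) (@log_lam n m k)).
Proof.
move=> n_ge2 _ /andP[k_gt0 _] _ p_mod.
have n_gt0 : (0 < n)%N by apply: leq_trans n_ge2.
split; [exact: H_iso_L | exact: HNN_iso_LOG].
Qed.
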